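(* Let $(a_n)_{n\ge 0}$ be complex numbers with $\#\{n\colon a_n\neq 0\}=+\infty$ and $\varlimsup_{n\to+\infty}\sqrt[n]{|a_n|}=0$. For $r>0$ let $\mathcal{N}(r)=\{n\in\mathbb{Z}_+\colon \ln(|a_n|r^n)>0\}$, $N(r)=\#\mathcal{N}(r)$ and $s(r)=2\sum_{n\in\mathcal{N}(r)}\ln(|a_n|r^n)$. Let $\varepsilon>0$. Then there exists a set $E\subset(1;+\infty)$ of finite logarithmic measure such that for all $r\in(1;+\infty)\setminus E$, $$N(r)<s^{1/2}(r)\exp\{(1+\varepsilon)\sqrt{\ln s(r)}\}.$$
   Context: A set $E\subset(1,+\infty)$ has finite logarithmic measure if $\int_E\frac{dr}{r}<+\infty$. *)

From HB Require Import structures.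
From mathcomp Require Import all_boot all_order all_algebra.
From mathcomp Require Import all_classical all_reals all_analysis.
From mathcomp Require Import finmap complex.
Set Implicit Arguments. Unset Strict Implicit. Unset Printing Implicit Defensive.
Import Order.TTheory GRing.Theory Num.Theory.
Local Open Scope classical_set_scope.
Local Open Scope ring_scope.

Definition finite_log_measure (R : realType) (E : set R) : Prop :=
  [/\ measurable E, E `<=` `]1, +oo[ &
      (\int[lebesgue_measure]_(x in E) (x^-1)%:E < +oo)%E].

Definition Ncal_set (R : realType) (a : nat -> R[i]) (r : R) : set nat :=
  [set n | 0 < ln (Normc.normc (a n) * r ^+ n)].

Definition N_count (R : realType) (a : nat -> R[i]) (r : R) : nat :=
  (#|` fset_set (Ncal_set a r)|)%fset.

Definition s_val (R : realType) (a : nat -> R[i]) (r : R) : R :=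
  2 * (\sum_(n \in Ncal_set a r) ln (Normc.normc (a n) * r ^+ n)).

(* Write L_n(r) = ln (|a_n| r^n). Each L_n is affine in ln r with slope n, and
   N(r) is finite because the a_n decay faster than any geometric sequence.
   The indices in N(r) are distinct naturals, so they sum to at least
   N(N-1)/2 and s grows by at least N(N-1) (ln r2 - ln r1) from r1 to r2.
   At an exceptional point N^2 >= s e^{2(1+eps) sqrt(ln s)}, while s grows by
   a factor at most e^{2k+3} as long as sqrt(ln s) stays in [k+1, k+2); hence
   the exceptional points of level k lie in a window of logarithmic radius
   2e e^{-2 eps (k+1)}, and these radii are summable. *)

From HB Require Import structures.
From mathcomp Require Import all_boot all_order all_algebra.
From mathcomp Require Import all_classical all_reals all_analysis.
From mathcomp Require Import finmap complex measurable_realfun.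
From mathcomp Require Import zify ring lra.
Set Implicit Arguments. Unset Strict Implicit. Unset Printing Implicit Defensive.
Import Order.TTheory GRing.Theory Num.Theory.

Lemma uniq_sum_ge (s : seq nat) : uniq s ->
  size s * (size s).-1 <= (\sum_(x <- s) x).*2.
Proof.
suff bounded m t : uniq t -> all (fun x => x < m) t ->
    size t * (size t).-1 <= (\sum_(x <- t) x).*2.
  move=> us; apply: (bounded (\max_(x <- s) x).+1) => //.
  by apply/allP => x xs; rewrite ltnS; apply: leq_bigmax_seq.
elim: m t => [|m IH] t ut t_lt; first by case: t ut t_lt.
have [mt|mNt] := boolP (m \in t); last first.
  apply: IH => //; apply/allP => x xt; move/allP: t_lt => /(_ x xt).
  by rewrite ltnS leq_eqVlt; case: eqP => // xm; rewrite -xm xt in mNt.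
set u := rem m t.
have u_lt : all (fun x => x < m) u.
  apply/allP => x; rewrite (mem_rem_uniq m ut) inE => /andP[xm xt].
  by move/allP: t_lt => /(_ x xt); rewrite ltnS leq_eqVlt (negbTE xm).
have size_u : size u <= m.
  rewrite -[m in _ <= m](size_iota 0 m); apply: uniq_leq_size; first exact: rem_uniq.
  by move=> x xu; rewrite mem_iota /=; move/allP: u_lt => /(_ x xu).
have size_t : size t = (size u).+1.
  by rewrite size_rem // prednK // -has_predT; apply/hasP; exists m.
have := IH _ (rem_uniq m ut) u_lt.
rewrite (big_rem m mt) /= size_t -/u; set S := \sum_(x <- u) x.
by case: (size u) size_u => /= [|n]; lia.
Qed.

Local Open Scope classical_set_scope.
Local Open Scope ring_scope.

Lemma expR_sqr_le (R : realType) (s j : R) : 0 < j -> j <= Num.sqrt (ln s) ->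
  expR (j ^+ 2) <= s.
Proof.
move=> j0 j_le.
have ln_s_gt0 : 0 < ln s by rewrite -sqrtr_gt0 (lt_le_trans j0).
have s_gt0 : 0 < s by rewrite ltNge; apply: contraTN ln_s_gt0 => /ln0 ->; rewrite ltxx.
by rewrite -[leRHS]lnK ?posrE // ler_expR -ler_sqrt ?(ltW ln_s_gt0) // sqrtr_sqr ger0_norm ?(ltW j0).
Qed.

Lemma lt_expR_sqr (R : realType) (s j : R) : Num.sqrt (ln s) < j -> s < expR (j ^+ 2).
Proof.
move=> lt_j; have j0 : 0 < j := le_lt_trans (sqrtr_ge0 _) lt_j.
have [s_le0|s_gt0] := lerP s 0; first exact: le_lt_trans s_le0 (expR_gt0 _).
by rewrite -[ltLHS]lnK ?posrE // ltr_expR -ltr_sqrt ?exprn_gt0 // sqrtr_sqr ger0_norm ?(ltW j0).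
Qed.

Lemma sqr_le_double_mul_pred (R : numDomainType) (N : nat) : (2 <= N)%N ->
  N%:R ^+ 2 <= 2 * (N * N.-1)%:R :> R.
Proof.
move=> N2; rewrite -natrX -natrM ler_nat.
by case: N N2 => [|[|N]] //= _; nia.
Qed.

Lemma expR_sub1_le (R : realType) (x : R) : expR x - 1 <= x * expR x.
Proof.
have := ler_wpM2l (expR_ge0 x) (expR_ge1Dx (- x)).
by rewrite -expRD addrN expR0 mulrDr mulr1 mulrN mulrC; lra.
Qed.

Lemma exists_nat_itv (R : realType) (t : R) : 1 <= t ->
  exists k : nat, k.+1%:R <= t < k.+2%:R.
Proof.
move=> t1; have [n /andP[lo hi]] : exists n : nat, n%:R <= t < n.+1%:R.
  by eexists; apply: truncn_itv; apply: le_trans t1.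
case: n lo hi => [|k] lo hi; first by move: hi; rewrite ltNge t1.
by exists k; rewrite lo hi.
Qed.

Lemma log_diam_window (R : realType) (S : set R) (d : R) : 0 <= d -> S `<=` `]0, +oo[ ->
  (forall x y, S x -> S y -> x <= y -> ln y - ln x <= d) ->
  exists2 c, 0 < c & S `<=` `[c * expR (- d), c * expR d].
Proof.
move=> d0 S_pos diam.
have [[c Sc]|S0] := pselect (exists c, S c); last first.
  by exists 1 => // x Sx; exfalso; apply: S0; exists x.
have pos x : S x -> 0 < x by move/S_pos; rewrite /= in_itv /= andbT.
exists c; first exact: pos.
move=> x Sx; rewrite /= in_itv /=.
have close : ln c - d <= ln x <= ln c + d.
  have [xc|cx] := lerP x c.
    by have := diam _ _ Sx Sc xc; have := ler_ln (pos x Sx) (pos c Sc); lra.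
  by have := diam _ _ Sc Sx (ltW cx); have := ler_ln (pos c Sc) (pos x Sx); lra.
rewrite -(lnK (pos x Sx)) -[c](lnK (pos c Sc)) -!expRD !ler_expR.
by move: close => /andP[]; lra.
Qed.

Section LogarithmicMeasure.
Variable R : realType.

Lemma measurable_inv_gt1 (D : set R) : measurable D -> D `<=` `]1, +oo[ ->
  measurable_fun D (fun x : R => (x^-1)%:E).
Proof.
move=> mD D1; apply/measurable_EFinP.
have max1_gt0 (x : R) : 0 < Num.max x 1 by apply: lt_le_trans ltr01 _; rewrite le_max lexx orbT.
apply: (eq_measurable_fun (fun x : R => (Num.max x 1)^-1)).
  move=> x /set_mem /D1; rewrite /= in_itv /= andbT => x1.
  by rewrite max_l // ltW.
apply: nonincreasing_measurable => // x y xy.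
by rewrite lef_pV2 ?posrE // ge_max !le_max xy lexx !orbT.
Qed.

Lemma integral_inv_itv_le (al be : R) : 0 < al -> al <= be ->
  (\int[lebesgue_measure]_(x in `]1%R, +oo[ `&` `[al, be]) (x^-1)%:E
     <= ((be - al) / al)%:E)%E.
Proof.
move=> al0 albe.
set D := `]1, +oo[ `&` `[al, be].
have mD : measurable D by apply: measurableI; exact: measurable_itv.
have inv_le x : D x -> ((x^-1)%:E <= (cst (al^-1)%:E) x)%E.
  rewrite /D /= !in_itv /= andbT => -[_ /andP[alx _]].
  by rewrite lee_fin lef_pV2 ?posrE // (lt_le_trans al0).
have inv_ge0 x : D x -> (0 <= (x^-1)%:E)%E.
  by rewrite /D /= !in_itv /= andbT => -[x1 _]; rewrite lee_fin invr_ge0 ltW // (lt_trans ltr01).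
apply: (le_trans (@ge0_le_integral _ _ _ lebesgue_measure D mD _ _ inv_ge0
  (measurable_inv_gt1 mD (@subIsetl _ _ _)) (measurable_cst _) inv_le)).
rewrite integral_cst //.
have muD : (lebesgue_measure D <= lebesgue_measure `[al, be])%E.
  have mI : measurable (`[al, be] : set R) by exact: measurable_itv.
  by apply: le_measure; rewrite ?in_setE // => x [].
apply: (le_trans (lee_wpmul2l _ muD)); first by rewrite lee_fin invr_ge0 ltW.
rewrite lebesgue_measure_itv /= lte_fin.
case: ltgtP albe => // [albe' _|-> _]; last by rewrite mule0 subrr mul0r.
by rewrite -EFinD -EFinM lee_fin mulrC.
Qed.

Lemma finite_log_measure_bigcup (J : nat -> set R) (b : nat -> R) :
  (forall k, measurable (J k)) -> (forall k, J k `<=` `]1, +oo[) ->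
  (forall k, \int[lebesgue_measure]_(x in J k) (x^-1)%:E <= (b k)%:E)%E ->
  (\sum_(k <oo) (b k)%:E < +oo)%E ->
  finite_log_measure (\bigcup_k J k).
Proof.
move=> mJ J1 intJ sumb.
have U1 : \bigcup_k J k `<=` `]1, +oo[ by move=> x [k _]; exact: J1.
have inv_ge0 x : (\bigcup_k J k) x -> (0 <= (x^-1)%:E)%E.
  by move/U1; rewrite /= in_itv /= andbT lee_fin invr_ge0 => /ltW/(le_trans ler01).
have mU : measurable (\bigcup_k J k) := bigcupT_measurable _ mJ.
split; [exact: mU | exact: U1 |].
rewrite seqDU_bigcup_eq ge0_integral_bigcup -?seqDU_bigcup_eq //;
  [|exact: seqDU_measurable|exact: measurable_inv_gt1].
apply: le_lt_trans sumb; apply: lee_nneseries => [k _ _|k _].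
  apply: integral_ge0 => x Jx; apply: inv_ge0; exists k => //.
  exact: subset_seqDU Jx.
apply: le_trans (intJ k); apply: ge0_subset_integral.
- exact: seqDU_measurable.
- exact: mJ.
- exact: measurable_inv_gt1.
- by move=> x Jx; apply: inv_ge0; exists k.
- exact: subset_seqDU.
Qed.

Lemma geometric_nneseries_lty (M q : R) : 0 <= q < 1 ->
  (\sum_(i <oo) (M * q ^+ i)%:E < +oo)%E.
Proof.
move=> /andP[q0 q1].
have partial_sums : (fun n => \sum_(0 <= i < n) (M * q ^+ i)%:E) @ \oo --> (M * (1 - q)^-1)%:E.
  apply: cvg_EFin; first by near=> n; rewrite sumEFin.
  rewrite [X in X @ _ --> _](_ : _ = series (geometric M q)); last first.
    by apply/funext => n; rewrite /= sumEFin.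
  by apply: cvg_geometric_series; rewrite ger0_norm.
by rewrite (cvg_lim _ partial_sums) ?ltry.
Unshelve. all: by end_near.
Qed.

Lemma integral_inv_window (c d : R) : 0 < c -> 0 <= d ->
  (\int[lebesgue_measure]_(x in `]1%R, +oo[ `&` `[(c * expR (- d))%R, (c * expR d)%R])
     (x^-1)%:E <= (expR (2 * d) - 1)%:E)%E.
Proof.
move=> c0 d0; have cE_gt0 : 0 < c * expR (- d) by rewrite mulr_gt0 ?expR_gt0.
apply: le_trans (integral_inv_itv_le _ _) _ => //.
  by rewrite ler_pM2l // ler_expR; lra.
rewrite lee_fin -mulrBr invfM mulrACA mulfV ?gt_eqF // mul1r mulrBl mulfV ?gt_eqF ?expR_gt0 //.
by rewrite -expRN opprK -expRD -mulr2n -[d *+ 2]mulr_natl.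
Qed.

Lemma finite_log_measure_windows (R0 e q : R) (c : nat -> R) :
  1 <= R0 -> 0 <= e -> 0 <= q < 1 -> (forall k, 0 < c k) ->
  finite_log_measure (\bigcup_k (`]1, +oo[ `&` if k is k'.+1
    then `[c k' * expR (- (e * q ^+ k)), c k' * expR (e * q ^+ k)] else `[1, R0])).
Proof.
move=> R01 e0 /andP[q0 q1] c0.
have Y_ge0 : 0 <= 2 * e * expR (2 * e) by rewrite !mulr_ge0 ?expR_ge0.
pose M := R0 + 2 * e * expR (2 * e).
apply: (finite_log_measure_bigcup (b := fun k => M * q ^+ k)).
- by case=> [|k]; apply: measurableI; apply: measurable_itv.
- by move=> k x [].
- case=> [|k].
    apply: le_trans (integral_inv_itv_le ltr01 R01) _.
    by rewrite lee_fin divr1 expr0 mulr1 /M; lra.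
  have qk_ge0 : 0 <= q ^+ k.+1 by rewrite exprn_ge0.
  have qk_le1 : q ^+ k.+1 <= 1 by rewrite exprn_ile1 // ltW.
  have rho_ge0 : 0 <= e * q ^+ k.+1 by rewrite mulr_ge0.
  apply: le_trans (integral_inv_window (c0 k) rho_ge0) _; rewrite lee_fin.
  have rho_le : 2 * (e * q ^+ k.+1) <= 2 * e by rewrite ler_pM2l // ler_piMr.
  have := expR_sub1_le (2 * (e * q ^+ k.+1)).
  have exp_le : expR (2 * (e * q ^+ k.+1)) <= expR (2 * e) by rewrite ler_expR.
  have := ler_wpM2l (mulr_ge0 (ler0n _ 2) rho_ge0) exp_le.
  have := mulr_ge0 (le_trans ler01 R01) qk_ge0; rewrite /M; nra.
- by apply: geometric_nneseries_lty; rewrite q0.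
Qed.

End LogarithmicMeasure.

Lemma normc_ge0 (R : rcfType) (z : R[i]) : 0 <= Normc.normc z.
Proof. by case: z => x y; rewrite /Normc.normc sqrtr_ge0. Qed.

Section Coefficients.
Variables (R : realType) (a : nat -> R[i]).

Lemma Ncal_set_gt0 r n : Ncal_set a r n -> 0 < Normc.normc (a n) * r ^+ n.
Proof.
rewrite /Ncal_set /= => h; rewrite ltNge; apply/negP => le0.
by rewrite ln0 // ltxx in h.
Qed.

Lemma ln_coef_shift r1 r2 n : 0 < r1 -> 0 < r2 -> Ncal_set a r1 n ->
  ln (Normc.normc (a n) * r2 ^+ n) =
  ln (Normc.normc (a n) * r1 ^+ n) + n%:R * (ln r2 - ln r1).
Proof.
move=> r10 r20 /Ncal_set_gt0 an_r1.
have an0 : 0 < Normc.normc (a n).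
  by rewrite lt_def normc_ge0 andbT; apply: contraTneq an_r1 => ->; rewrite mul0r ltxx.
rewrite !lnM ?posrE ?exprn_gt0 // (lnXn n r10) (lnXn n r20).
rewrite -[ln r1 *+ n]mulr_natl -[ln r2 *+ n]mulr_natl; ring.
Qed.

Lemma subset_Ncal_set r1 r2 : 0 < r1 -> r1 <= r2 ->
  Ncal_set a r1 `<=` Ncal_set a r2.
Proof.
move=> r10 r12 n n_r1; have r20 := lt_le_trans r10 r12.
rewrite /Ncal_set /= (ln_coef_shift r10 r20 n_r1).
have : 0 <= n%:R * (ln r2 - ln r1) by rewrite mulr_ge0 // subr_ge0 ler_ln ?posrE.
by move: n_r1; rewrite /Ncal_set /=; lra.
Qed.

Lemma s_val_ge0 r : 0 <= s_val a r.
Proof. by rewrite /s_val mulr_ge0 // fsumr_ge0 // => n /ltW. Qed.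

Definition exceptional (eps r : R) : Prop :=
  Num.sqrt (s_val a r) * expR ((1 + eps) * Num.sqrt (ln (s_val a r)))
    <= (N_count a r)%:R.

Definition exceptional_level (eps : R) (k : nat) : set R :=
  [set r | [/\ 0 < r, exceptional eps r &
     k.+1%:R <= Num.sqrt (ln (s_val a r)) < k.+2%:R]].

Lemma exceptional_sqr eps r : exceptional eps r ->
  s_val a r * expR (2 * (1 + eps) * Num.sqrt (ln (s_val a r))) <= (N_count a r)%:R ^+ 2.
Proof.
set A := Num.sqrt (s_val a r) * expR ((1 + eps) * Num.sqrt (ln (s_val a r))).
have -> : s_val a r * expR (2 * (1 + eps) * Num.sqrt (ln (s_val a r))) = A ^+ 2.
  rewrite exprMn sqr_sqrtr ?s_val_ge0 // -expRM_natl; congr (_ * expR _); ring.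
have A_ge0 : 0 <= A by rewrite mulr_ge0 ?sqrtr_ge0 ?expR_ge0.
by move=> exc; rewrite !expr2 ler_pM.
Qed.

Hypothesis a_root_limsup :
  limn_esup (fun n : nat => ((Normc.normc (a n)) `^ (n%:R^-1))%:E) = 0%E.

Lemma Ncal_set_finite r : 0 < r -> finite_set (Ncal_set a r).
Proof.
move=> r0.
have root_cvg : (fun n => (Normc.normc (a n) `^ n%:R^-1)%:E) @ \oo --> 0%E.
  apply: limn_esup_le_cvg; rewrite ?a_root_limsup // => n.
  by rewrite lee_fin powR_ge0.
have [_ {}root_cvg] := (fine_cvgP _ _).1 root_cvg.
have rV_gt0 : 0 < r^-1 by rewrite invr_gt0.
have [N _ HN] := cvgr_lt _ root_cvg _ rV_gt0.
apply: (sub_finite_set (B := `I_N.+1)); last exact: finite_II.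
move=> n n_r /=; rewrite ltnNge; apply/negP => Nn.
have n_gt0 : (0 < n)%N by lia.
set x := Normc.normc (a n) `^ n%:R^-1.
have an_x : Normc.normc (a n) = x ^+ n.
  rewrite /x -powR_mulrn ?powR_ge0 // -powRrM mulVf ?powRr1 ?normc_ge0 //.
  by rewrite pnatr_eq0 -lt0n.
have xr1 : x * r < 1 by rewrite -ltr_pdivlMr // div1r; apply: HN => /=; lia.
have : (x * r) ^+ n < 1 by rewrite exprn_ilt1 ?mulr_ge0 ?powR_ge0 ?ltW // -lt0n.
by move: n_r; rewrite /Ncal_set /= an_x -exprMn => + /ltW /ln_le0; rewrite leNgt => ->.
Qed.

Lemma s_val_ge_term r n : 0 < r -> Ncal_set a r n ->
  2 * ln (Normc.normc (a n) * r ^+ n) <= s_val a r.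
Proof.
move=> r0 n_r; have fin := Ncal_set_finite r0.
rewrite /s_val (fsbigD1 n) // ler_pM2l // lerDl.
by apply: fsumr_ge0 => m [+ _] => /ltW.
Qed.

Lemma s_val_incr r1 r2 : 0 < r1 -> r1 <= r2 ->
  s_val a r1 + (ln r2 - ln r1) * (N_count a r1 * (N_count a r1).-1)%:R
    <= s_val a r2.
Proof.
move=> r10 r12; have r20 := lt_le_trans r10 r12.
have sub := subset_Ncal_set r10 r12.
set A1 := Ncal_set a r1 in sub *; set A2 := Ncal_set a r2 in sub *.
have fin1 : finite_set A1 := Ncal_set_finite r10.
have fin2 : finite_set A2 := Ncal_set_finite r20.
set d := ln r2 - ln r1.
have d0 : 0 <= d by rewrite subr_ge0 ler_ln ?posrE.
set L := fun r n => ln (Normc.normc (a n) * r ^+ n).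
have A1_A2 : \sum_(n \in A1) L r2 n <= \sum_(n \in A2) L r2 n.
  rewrite [leRHS](fsbigID A1) // setIidr // lerDl.
  by apply: fsumr_ge0 => n [+ _] => /ltW.
have shift : \sum_(n \in A1) L r2 n = \sum_(n \in A1) L r1 n + (\sum_(n \in A1) (n%:R : R)) * d.
  rewrite (eq_fsbigr (fun n => L r1 n + n%:R * d)); last first.
    by move=> n /set_mem; exact: ln_coef_shift.
  by rewrite fsbig_split // mulr_fsuml.
have indices : (N_count a r1 * (N_count a r1).-1)%:R <= (\sum_(n \in A1) (n%:R : R)) * 2.
  rewrite fsbig_finite // -natr_sum -natrM ler_nat muln2.
  exact: uniq_sum_ge (fset_uniq _).
have := ler_wpM2l d0 indices; rewrite /s_val -/A1 -/A2 -/(L r1) -/(L r2).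
move: shift A1_A2 => /=; nra.
Qed.

Lemma exceptional_log_diam eps k r1 r2 : 0 < eps -> 0 < r1 -> r1 <= r2 ->
  exceptional eps r1 -> k.+1%:R <= Num.sqrt (ln (s_val a r1)) ->
  Num.sqrt (ln (s_val a r2)) < k.+2%:R ->
  ln r2 - ln r1 <= 2 * expR (1 - 2 * eps * k.+1%:R).
Proof.
move=> eps0 r10 r12 /exceptional_sqr exc lo hi.
set j : R := k.+1%:R in lo *; have j1 : 1 <= j by rewrite ler1n.
have {hi} s2_lt : s_val a r2 < expR (1 - 2 * eps * j) * expR (j ^+ 2 + 2 * (1 + eps) * j).
  rewrite -expRD (_ : 1 - _ + _ = (j + 1) ^+ 2); last by ring.
  by apply: lt_expR_sqr; rewrite /j natr1.
set X := expR (j ^+ 2 + 2 * (1 + eps) * j) in s2_lt *.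
set N := N_count a r1 in exc *.
have X_le : X <= N%:R ^+ 2.
  apply: le_trans exc; rewrite /X expRD.
  apply: ler_pM; rewrite ?expR_ge0 //; first exact: expR_sqr_le (lt_le_trans ltr01 j1) lo.
  by rewrite ler_expR; apply: ler_wpM2l lo; lra.
have X_gt1 : 1 < X by rewrite expR_gt1; nra.
have N2 : (2 <= N)%N.
  rewrite leqNgt; apply: contraTN X_gt1 => N1; rewrite -leNgt (le_trans X_le) //.
  by rewrite expr_le1 // lern1 -ltnS.
have d0 : 0 <= ln r2 - ln r1 by rewrite subr_ge0 ler_ln ?posrE ?(lt_le_trans r10).
have incr := s_val_incr r10 r12; rewrite -/N in incr.
have dX : (ln r2 - ln r1) * X <= 2 * ((ln r2 - ln r1) * (N * N.-1)%:R).
  apply: le_trans (ler_wpM2l d0 X_le) _; rewrite [leRHS]mulrCA.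
  by apply: ler_wpM2l => //; apply: sqr_le_double_mul_pred.
rewrite -(ler_pM2r (lt_trans ltr01 X_gt1)); have := s_val_ge0 r1.
lra.
Qed.

Lemma exceptional_level_window eps k : 0 < eps ->
  exists2 c, 0 < c & exceptional_level eps k `<=`
    `[c * expR (- (2 * expR 1 * expR (- (2 * eps)) ^+ k.+1)),
      c * expR (2 * expR 1 * expR (- (2 * eps)) ^+ k.+1)].
Proof.
move=> eps0; apply: log_diam_window.
- by rewrite !mulr_ge0 ?exprn_ge0 ?expR_ge0.
- by move=> r [r0 _ _]; rewrite /= in_itv /= r0.
move=> x y [x0 exc /andP[lo _]] [_ _ /andP[_ hi]] xy.
rewrite -expRM_natl -mulrA -expRD (_ : 1 + _ = 1 - 2 * eps * k.+1%:R); last by ring.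
exact: exceptional_log_diam eps0 x0 xy exc lo hi.
Qed.

Lemma sqrt_ln_s_val_ge1_eventually : infinite_set [set n | a n != 0] ->
  exists2 R0, 1 < R0 & forall r, R0 <= r -> 1 <= Num.sqrt (ln (s_val a r)).
Proof.
move=> a_inf; have [n0 n0_gt0 an0] : exists2 n0, (0 < n0)%N & a n0 != 0.
  apply: contrapT => a_eq0; apply/a_inf/(sub_finite_set (B := [set 0%N])).
    by case=> // n an; exfalso; apply: a_eq0; exists n.+1.
  exact: finite_set1.
set m := Normc.normc (a n0).
have m0 : 0 < m by rewrite lt_def normc_ge0 andbT; apply: contra an0 => /eqP/Normc.eq0_normc ->.
exists (1 + expR (expR 1) / m); first by rewrite ltrDl divr_gt0 ?expR_gt0.
move=> r r_ge; have r1 : 1 < r by apply: lt_le_trans _ r_ge; rewrite ltrDl divr_gt0 ?expR_gt0.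
have r0 := lt_trans ltr01 r1.
have big : expR (expR 1) <= m * r ^+ n0.
  have r_le : r <= r ^+ n0 by rewrite -{1}[r]expr1 ler_eXn2l // (ltW r1).
  apply: le_trans (ler_wpM2l (ltW m0) r_le); rewrite -ler_pdivrMl //.
  by apply: le_trans r_ge; rewrite mulrC lerDr.
have n0_in : Ncal_set a r n0.
  by apply: ln_gt0; apply: lt_le_trans big; rewrite expR_gt1 expR_gt0.
have e_le : expR 1 <= ln (m * r ^+ n0).
  have mr_gt0 : 0 < m * r ^+ n0 := lt_le_trans (expR_gt0 _) big.
  by rewrite -[leLHS]expRK ler_ln ?posrE ?expR_gt0.
have s_ge := s_val_ge_term r0 n0_in.
have s_ge_e : expR 1 <= s_val a r by have := expR_gt0 (1 : R); lra.
have ln_s_ge1 : 1 <= ln (s_val a r).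
  by rewrite -[leLHS](expRK 1) ler_ln ?posrE ?expR_gt0 // (lt_le_trans (expR_gt0 _) s_ge_e).
by rewrite -sqrtr1 ler_sqrt // (le_trans ler01 ln_s_ge1).
Qed.

End Coefficients.

Unset Implicit Arguments.

Theorem lemma3p3 (R : realType) (a : nat -> R[i])
  (hinf : infinite_set [set n | a n != 0])
  (hlimsup : limn_esup (fun n : nat => ((Normc.normc (a n)) `^ (n%:R^-1))%:E) = 0%E)
  (eps : R) (heps : 0 < eps) :
  exists E : set R, finite_log_measure E /\
    forall r : R, 1 < r -> ~ E r ->
      (N_count a r)%:R <
        Num.sqrt (s_val a r) * expR ((1 + eps) * Num.sqrt (ln (s_val a r))).
Proof.
have [R0 R0_gt1 sqrt_ln_s_ge1] := sqrt_ln_s_val_ge1_eventually hlimsup hinf.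
pose q := expR (- (2 * eps)); pose e : R := 2 * expR 1.
have /choice[c window] : forall k, exists c, 0 < c /\
    exceptional_level a eps k `<=` `[c * expR (- (e * q ^+ k.+1)), c * expR (e * q ^+ k.+1)].
  by move=> k; have [c c0 sub] := exceptional_level_window hlimsup k heps; exists c.
(* The piece of index 0 covers the range where sqrt (ln s) may be below 1. *)
exists (\bigcup_k (`]1, +oo[ `&` if k is k'.+1
  then `[c k' * expR (- (e * q ^+ k)), c k' * expR (e * q ^+ k)] else `[1, R0])); split.
  apply: finite_log_measure_windows; first exact: ltW.
  - by rewrite mulr_ge0 ?expR_ge0.
  - by rewrite expR_ge0 -expR0 ltr_expR; lra.
  - by move=> k; case: (window k).
move=> r r1 outside; rewrite ltNge; apply/negP => exc; apply: outside.
have [rR0|R0r] := lerP r R0.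
  by exists 0%N => //; split; rewrite /= in_itv /= ?r1 ?rR0 ?(ltW r1).
have [k lvl] := exists_nat_itv (sqrt_ln_s_ge1 r (ltW R0r)).
exists k.+1 => //; split; first by rewrite /= in_itv /= r1.
by apply: (window k).2; split => //; exact: lt_trans ltr01 r1.
Qed.
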